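(* Let $\gamma>0$, $\lambda>0$ and $\omega\in[-\pi,\pi]$, and let $f$ be the $\mathrm{GCPC}(\omega,\gamma,\lambda)$ density on the circle. - (i) If $\lambda=1$, then $f$ is unimodal. - (A) If $1<\lambda\le\gamma^2+1$, then $f$ is unimodal. - (B) If $\lambda>\gamma^2+1$, then $f$ is unimodal when $(\gamma^2+1)(\lambda-1)>(\lambda-\gamma^2-1)(2\lambda-1)^2$. - (C) If $\tfrac12<\lambda<1$, then $f$ is unimodal when $(\gamma^2+1-\lambda)(1-2\lambda)^2>(\gamma^2+1)(1-\lambda)$. - (D) If $\lambda\le\tfrac12$, then $f$ is never unimodal (it has more than one local maximum).
   Context: For $\lambda>0$, $\gamma\ge0$ and $\omega\in[-\pi,\pi]$, the distribution $\mathrm{GCPC}(\omega,\gamma,\lambda)$ is the distribution on the circle with density $$f(\theta)=\frac{1}{2\pi\sqrt{\lambda}\,\bigl(b\sqrt{\gamma^2+1}-\gamma\cos\phi\,\sqrt{b}\bigr)},\qquad \phi=\theta-\omega,\quad b=\cos^2\phi+\frac{\sin^2\phi}{\lambda}.$$ A density on the circle is called unimodal if it has exactly one local maximum on the circle. The density is viewed as a $2\pi$-periodic function of $\theta$. *)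

From Stdlib Require Import Reals Lra.
Open Scope R_scope.

Definition gcpc_density (omega gamma lambda theta : R) : R :=
  let phi := theta - omega in
  let b := cos phi ^ 2 + sin phi ^ 2 / lambda in
  1 / (2 * PI * sqrt lambda *
       (b * sqrt (gamma ^ 2 + 1) - gamma * cos phi * sqrt b)).

Definition is_local_max (f : R -> R) (t : R) : Prop :=
  exists d, 0 < d /\ forall x, Rabs (x - t) < d -> f x <= f t.

(* Points of the circle are represented by their angle in [0, 2*PI). *)
Definition on_circle (t : R) : Prop := 0 <= t < 2 * PI.

Definition unimodal_circ (f : R -> R) : Prop :=
  exists t, on_circle t /\ is_local_max f t /\
    forall s, on_circle s -> is_local_max f s -> s = t.

From Stdlib Require Import Reals Lra Psatz.
From Coquelicot Require Import Coquelicot.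
Open Scope R_scope.

(* Write c = cos (theta - omega), G = sqrt (gamma^2 + 1) and b = c^2 + (1 - c^2) / lambda.
   The density is a positive multiple of 1 / D(c) with D(c) = b G - gamma c sqrt b > 0, and
     lambda sqrt b D'(c) = 2 G (lambda - 1) c sqrt b - gamma (1 + 2 (lambda - 1) c^2).
   For lambda > 1/2 the right-hand side is negative on [-1, 1]: comparing squares, lambda
   times the gap is lambda gamma^2 + 4 (G^2 - lambda) (lambda - 1) p, affine in
   p = c^2 (1 + (lambda - 1) c^2) in [0, lambda], and at p = lambda it equals
   P = (G^2 - lambda) (1 - 2 lambda)^2 - G^2 (1 - lambda), which (i), (A), (B) and (C) all
   make positive.  A strictly increasing function of cos (theta - omega) has its only local
   maximum on the circle at theta = omega.  For lambda <= 1/2, D still decreases on [0, 1]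
   but increases near c = -1, so theta = omega and theta = omega + pi are both local maxima. *)

Definition strict_incr_on (a b : R) (F : R -> R) : Prop :=
  forall x y, a <= x -> x < y -> y <= b -> F x < F y.

Definition strict_decr_on (a b : R) (F : R -> R) : Prop :=
  forall x y, a <= x -> x < y -> y <= b -> F y < F x.

Lemma strict_incr_on_le_right (a b : R) (F : R -> R) :
  strict_incr_on a b F -> forall c, a <= c <= b -> F c <= F b.
Proof.
  intros hF c hc. destruct (Req_dec c b) as [->|hcb]; [lra|].
  left. apply hF; lra.
Qed.

Lemma strict_decr_on_le_left (a b : R) (F : R -> R) :
  strict_decr_on a b F -> forall c, a <= c <= b -> F c <= F a.
Proof.
  intros hF c hc. destruct (Req_dec c a) as [->|hca]; [lra|].
  left. apply hF; lra.
Qed.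

Lemma strict_decr_on_of_derive (f f' : R -> R) (a b : R) :
  (forall c, a <= c <= b -> derivable_pt_lim f c (f' c)) ->
  (forall c, a <= c <= b -> f' c < 0) -> strict_decr_on a b f.
Proof.
  intros hd hsign x y hax hxy hyb.
  destruct (MVT_cor2 f f' x y hxy) as [c [hmvt hc]].
  { intros c hc. apply hd. lra. }
  assert (f' c < 0) by (apply hsign; lra). nra.
Qed.

Lemma strict_incr_on_of_derive (f f' : R -> R) (a b : R) :
  (forall c, a <= c <= b -> derivable_pt_lim f c (f' c)) ->
  (forall c, a <= c <= b -> 0 < f' c) -> strict_incr_on a b f.
Proof.
  intros hd hsign x y hax hxy hyb.
  destruct (MVT_cor2 f f' x y hxy) as [c [hmvt hc]].
  { intros c hc. apply hd. lra. }
  assert (0 < f' c) by (apply hsign; lra). nra.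
Qed.

Lemma strict_incr_on_inv (K : R) (D : R -> R) (a b : R) : 0 < K ->
  (forall c, a <= c <= b -> 0 < D c) -> strict_decr_on a b D ->
  strict_incr_on a b (fun c => 1 / (K * D c)).
Proof.
  intros hK hD hdecr x y hax hxy hyb.
  pose proof (hD x ltac:(lra)). pose proof (hD y ltac:(lra)).
  pose proof (hdecr x y hax hxy hyb).
  unfold Rdiv. rewrite !Rmult_1_l.
  apply Rinv_lt_contravar; [apply Rmult_lt_0_compat|]; nra.
Qed.

Lemma strict_decr_on_inv (K : R) (D : R -> R) (a b : R) : 0 < K ->
  (forall c, a <= c <= b -> 0 < D c) -> strict_incr_on a b D ->
  strict_decr_on a b (fun c => 1 / (K * D c)).
Proof.
  intros hK hD hincr x y hax hxy hyb.
  pose proof (hD x ltac:(lra)). pose proof (hD y ltac:(lra)).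
  pose proof (hincr x y hax hxy hyb).
  unfold Rdiv. rewrite !Rmult_1_l.
  apply Rinv_lt_contravar; [apply Rmult_lt_0_compat|]; nra.
Qed.

Lemma lt_of_sq_lt (x y : R) : 0 <= y -> x ^ 2 < y ^ 2 -> x < y.
Proof. intros. nra. Qed.

Lemma affine_pos_on (a b p T : R) : 0 < a -> 0 < a + b * T -> 0 <= p <= T -> 0 < a + b * p.
Proof. intros. destruct (Rle_or_lt 0 b); nra. Qed.

Lemma lt_sqrt_sq_add_1 (x : R) : x < sqrt (x ^ 2 + 1).
Proof.
  pose proof (sqrt_sqrt (x ^ 2 + 1) ltac:(nra)).
  pose proof (sqrt_pos (x ^ 2 + 1)).
  apply lt_of_sq_lt; nra.
Qed.

Lemma PI_gt_3 : 3 < PI.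
Proof. pose proof PI2_3_2. lra. Qed.

Lemma cos_taylor_bounds (u : R) : Rabs u <= 1 ->
  1 - u ^ 2 / 2 <= cos u <= 1 - u ^ 2 / 2 + u ^ 4 / 24.
Proof.
  intros hu. pose proof PI_gt_3. apply Rabs_le_between in hu.
  pose proof (cos_bound u 0 ltac:(lra) ltac:(lra)) as hb.
  unfold cos_approx, cos_term in hb. simpl in hb. lra.
Qed.

Lemma cos_ge_near_0 (a : R) : a < 1 ->
  exists d, 0 < d /\ forall u, Rabs u < d -> a <= cos u.
Proof.
  intros ha. exists (Rmin 1 (1 - a)). split.
  { apply Rmin_pos; lra. }
  intros u hu. pose proof (Rmin_l 1 (1 - a)). pose proof (Rmin_r 1 (1 - a)).
  pose proof (Rabs_pos u).
  pose proof (cos_taylor_bounds u ltac:(lra)) as [hcos _].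
  rewrite <- pow2_abs in hcos. nra.
Qed.

Lemma cos_lt_1 (e : R) : 0 < e <= 1 -> cos e < 1.
Proof.
  intros he. destruct (cos_taylor_bounds e ltac:(rewrite Rabs_right; lra)).
  assert (0 < e ^ 2 <= 1) by (split; nra).
  assert (e ^ 4 = e ^ 2 * e ^ 2) by ring.
  nra.
Qed.

Lemma cos_local_max (u : R) : is_local_max cos u -> cos u = 1.
Proof.
  intros [d [hd hmax]].
  assert (hsin : sin u = 0).
  { assert (h := deriv_maximum cos (u - d) (u + d) u (derivable_pt_cos u)
                   ltac:(lra) ltac:(lra)).
    rewrite derive_pt_cos in h.
    enough (- sin u = 0) by lra.
    apply h. intros x h1 h2. apply hmax, Rabs_def1; lra. }
  pose proof (sin2_cos2 u) as hpyth. unfold Rsqr in hpyth. rewrite hsin in hpyth.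
  destruct (Rle_or_lt 0 (cos u)) as [hc|hc]; [nra|exfalso].
  (* at cos u = -1, cos has a strict local minimum *)
  assert (hcu : cos u = -1) by nra.
  set (e := Rmin (d / 2) 1).
  assert (he : 0 < e <= 1 /\ e < d).
  { pose proof (Rmin_l (d / 2) 1). pose proof (Rmin_r (d / 2) 1).
    pose proof (Rmin_pos (d / 2) 1 ltac:(lra) ltac:(lra)). unfold e. lra. }
  specialize (hmax (e + u) ltac:(rewrite Rabs_right; lra)).
  rewrite cos_plus, hcu, hsin in hmax. pose proof (cos_lt_1 e ltac:(lra)). lra.
Qed.

Lemma cos_eq_1_small (u : R) : - (2 * PI) < u < 2 * PI -> cos u = 1 -> u = 0.
Proof.
  intros hu hc. replace u with (2 * (u / 2)) in hc by field. rewrite cos_2a_sin in hc.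
  assert (hs : sin (u / 2) = 0) by nra.
  destruct (Rtotal_order u 0) as [h|[h|h]]; [|assumption|].
  - pose proof (sin_lt_0_var (u / 2) ltac:(lra) ltac:(lra)). lra.
  - pose proof (sin_gt_0 (u / 2) ltac:(lra) ltac:(lra)). lra.
Qed.

Lemma circle_representative (w : R) : - (2 * PI) <= w <= 2 * PI ->
  exists t, on_circle t /\ forall x, cos (x - w) = cos (x - t).
Proof.
  intros hw. pose proof PI_gt_3. unfold on_circle.
  destruct (Rlt_or_le w 0) as [hneg|hnneg].
  - exists (w + 2 * PI). split; [lra|]. intros x.
    rewrite <- (cos_period (x - (w + 2 * PI)) 1). f_equal. simpl. ring.
  - destruct (Req_dec w (2 * PI)) as [->|hw2].
    + exists 0. split; [lra|]. intros x.
      rewrite <- (cos_period (x - 2 * PI) 1). f_equal. simpl. ring.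
    + exists w. split; [lra|]. reflexivity.
Qed.

Lemma is_local_max_of_cos (f F : R -> R) (t a : R) : a < 1 ->
  (forall c, a <= c <= 1 -> F c <= F 1) -> (forall x, f x = F (cos (x - t))) ->
  is_local_max f t.
Proof.
  intros ha hF hf. destruct (cos_ge_near_0 a ha) as [d [hd hnear]].
  exists d. split; [exact hd|]. intros x hx.
  rewrite !hf. replace (t - t) with 0 by ring. rewrite cos_0.
  apply hF. split; [apply hnear, hx|apply COS_bound].
Qed.

Lemma unimodal_circ_of_cos (f F : R -> R) (t : R) : on_circle t ->
  strict_incr_on (-1) 1 F -> (forall x, f x = F (cos (x - t))) -> unimodal_circ f.
Proof.
  intros ht hF hf. exists t. split; [exact ht|]. split.
  { apply (is_local_max_of_cos f F t (-1)); [lra| |exact hf].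
    apply strict_incr_on_le_right, hF. }
  intros s hs [d [hd hmax]].
  assert (hcos : is_local_max cos (s - t)).
  { exists d. split; [exact hd|]. intros u hu.
    destruct (Rle_or_lt (cos u) (cos (s - t))) as [|hlt]; [assumption|exfalso].
    specialize (hmax (u + t) ltac:(replace (u + t - s) with (u - (s - t)) by ring; exact hu)).
    rewrite !hf in hmax. replace (u + t - t) with u in hmax by ring.
    pose proof (hF _ _ (proj1 (COS_bound (s - t))) hlt (proj2 (COS_bound u))). lra. }
  apply cos_local_max in hcos. unfold on_circle in hs, ht.
  pose proof (cos_eq_1_small (s - t) ltac:(lra) hcos). lra.
Qed.

Section GcpcProfile.

Variables g l : R.

Definition gcpc_b (c : R) : R := c ^ 2 + (1 - c ^ 2) / l.

Definition gcpc_denom (c : R) : R :=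
  gcpc_b c * sqrt (g ^ 2 + 1) - g * c * sqrt (gcpc_b c).

Definition gcpc_profile (c : R) : R := 1 / (2 * PI * sqrt l * gcpc_denom c).

Definition gcpc_slope (c : R) : R :=
  2 * sqrt (g ^ 2 + 1) * (l - 1) * c * sqrt (gcpc_b c) - g * (1 + 2 * (l - 1) * c ^ 2).

Definition gcpc_discr : R := (g ^ 2 + 1 - l) * (1 - 2 * l) ^ 2 - (g ^ 2 + 1) * (1 - l).

Lemma gcpc_density_eq (w th : R) : gcpc_density w g l th = gcpc_profile (cos (th - w)).
Proof.
  unfold gcpc_density, gcpc_profile, gcpc_denom, gcpc_b. cbv zeta.
  replace (sin (th - w) ^ 2) with (1 - cos (th - w) ^ 2); [reflexivity|].
  pose proof (sin2_cos2 (th - w)). unfold Rsqr in *. lra.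
Qed.

Hypothesis hg : 0 < g.
Hypothesis hl : 0 < l.

Lemma gcpc_b_scaled (c : R) : l * gcpc_b c = 1 + (l - 1) * c ^ 2.
Proof. unfold gcpc_b. field. lra. Qed.

Lemma sq_le_gcpc_b (c : R) : -1 <= c <= 1 -> c ^ 2 <= gcpc_b c.
Proof.
  intros hc. unfold gcpc_b.
  assert (0 <= (1 - c ^ 2) / l) by (apply Rdiv_le_0_compat; nra). lra.
Qed.

Lemma gcpc_b_pos (c : R) : -1 <= c <= 1 -> 0 < gcpc_b c.
Proof.
  intros hc. pose proof (gcpc_b_scaled c).
  destruct (Rle_or_lt 1 l); nra.
Qed.

Lemma abs_le_sqrt_gcpc_b (c : R) : -1 <= c <= 1 -> Rabs c <= sqrt (gcpc_b c).
Proof.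
  intros hc. rewrite <- sqrt_Rsqr_abs. apply sqrt_le_1_alt.
  pose proof (sq_le_gcpc_b c hc). unfold Rsqr. lra.
Qed.

Lemma gcpc_denom_pos (c : R) : -1 <= c <= 1 -> 0 < gcpc_denom c.
Proof.
  intros hc. unfold gcpc_denom.
  pose proof (sq_le_gcpc_b c hc) as hcb. pose proof (gcpc_b_pos c hc) as hb.
  pose proof (sqrt_lt_R0 _ hb) as hs. pose proof (sqrt_sqrt _ (Rlt_le _ _ hb)) as hss.
  pose proof (sqrt_sqrt (g ^ 2 + 1) ltac:(nra)) as hGG. pose proof (sqrt_pos (g ^ 2 + 1)).
  set (s := sqrt (gcpc_b c)) in *. set (G := sqrt (g ^ 2 + 1)) in *.
  assert (hcmp : g * c < G * s) by (apply lt_of_sq_lt; nra).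
  replace (gcpc_b c * G - g * c * s) with (s * (G * s - g * c)) by (rewrite <- hss; ring).
  nra.
Qed.

Lemma gcpc_denom_derive (c : R) : -1 <= c <= 1 ->
  derivable_pt_lim gcpc_denom c (gcpc_slope c / (l * sqrt (gcpc_b c))).
Proof.
  intros hc. apply is_derive_Reals.
  pose proof (gcpc_b_pos c hc) as hb.
  unfold gcpc_denom, gcpc_slope. unfold gcpc_b in *.
  auto_derive.
  - lra.
  - replace (c * (c * 1) + (1 + - (c * (c * 1))) * / l) with (c ^ 2 + (1 - c ^ 2) / l)
      by (field; lra).
    replace (g * (g * 1) + 1) with (g ^ 2 + 1) by ring.
    pose proof (sqrt_lt_R0 _ hb) as hs. pose proof (sqrt_sqrt _ (Rlt_le _ _ hb)) as hss.
    set (s := sqrt (c ^ 2 + (1 - c ^ 2) / l)) in *.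
    replace (g * 1 * s) with (g * (s * s) / s) by (field; lra).
    rewrite hss. field. lra.
Qed.

Lemma gcpc_profile_incr_on (a b : R) : -1 <= a -> b <= 1 ->
  (forall c, a <= c <= b -> gcpc_slope c < 0) -> strict_incr_on a b gcpc_profile.
Proof.
  intros ha hb hslope. pose proof PI_gt_3. pose proof (sqrt_lt_R0 _ hl).
  apply (strict_incr_on_inv (2 * PI * sqrt l) gcpc_denom);
    [nra|intros; apply gcpc_denom_pos; lra|].
  apply (strict_decr_on_of_derive _ (fun c => gcpc_slope c / (l * sqrt (gcpc_b c))));
    intros c hc; [apply gcpc_denom_derive; lra|].
  pose proof (sqrt_lt_R0 _ (gcpc_b_pos c ltac:(lra))).
  apply Rdiv_neg_pos; [apply hslope, hc|nra].
Qed.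

Lemma gcpc_profile_decr_on (a b : R) : -1 <= a -> b <= 1 ->
  (forall c, a <= c <= b -> 0 < gcpc_slope c) -> strict_decr_on a b gcpc_profile.
Proof.
  intros ha hb hslope. pose proof PI_gt_3. pose proof (sqrt_lt_R0 _ hl).
  apply (strict_decr_on_inv (2 * PI * sqrt l) gcpc_denom);
    [nra|intros; apply gcpc_denom_pos; lra|].
  apply (strict_incr_on_of_derive _ (fun c => gcpc_slope c / (l * sqrt (gcpc_b c))));
    intros c hc; [apply gcpc_denom_derive; lra|].
  pose proof (sqrt_lt_R0 _ (gcpc_b_pos c ltac:(lra))).
  apply Rdiv_lt_0_compat; [apply hslope, hc|nra].
Qed.

Lemma gcpc_slope_neg (c : R) : 1 / 2 < l -> 0 < gcpc_discr -> -1 <= c <= 1 ->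
  gcpc_slope c < 0.
Proof.
  intros hl2 hP hc. unfold gcpc_slope.
  pose proof (gcpc_b_pos c hc) as hb.
  pose proof (sqrt_lt_R0 _ hb) as hs.
  assert (hls : l * (sqrt (gcpc_b c) * sqrt (gcpc_b c)) = 1 + (l - 1) * c ^ 2)
    by (rewrite sqrt_sqrt by lra; apply gcpc_b_scaled).
  pose proof (sqrt_sqrt (g ^ 2 + 1) ltac:(nra)) as hGG.
  pose proof (sqrt_pos (g ^ 2 + 1)).
  set (s := sqrt (gcpc_b c)) in *. set (G := sqrt (g ^ 2 + 1)) in *.
  assert (hy : 0 <= c ^ 2 <= 1) by nra.
  assert (hrhs : 0 < 1 + 2 * (l - 1) * c ^ 2) by (destruct (Rle_or_lt 1 l); nra).
  destruct (Rle_or_lt ((l - 1) * c) 0) as [hmc|hmc].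
  { assert (0 <= G * s) by nra. nra. }
  set (p := c ^ 2 * (1 + (l - 1) * c ^ 2)).
  assert (hp : 0 <= p <= l).
  { unfold p. split; [nra|].
    assert (0 <= (1 - c ^ 2) * (1 + (l - 1) * (1 + c ^ 2))) by
      (apply Rmult_le_pos; [lra|destruct (Rle_or_lt 1 l); nra]).
    nra. }
  assert (hgap : l * ((g * (1 + 2 * (l - 1) * c ^ 2)) ^ 2 - (2 * G * (l - 1) * c * s) ^ 2)
                 = l * g ^ 2 + 4 * (g ^ 2 + 1 - l) * (l - 1) * p).
  { replace (l * ((g * (1 + 2 * (l - 1) * c ^ 2)) ^ 2 - (2 * G * (l - 1) * c * s) ^ 2))
      with (l * (g * (1 + 2 * (l - 1) * c ^ 2)) ^ 2
            - 4 * (G * G) * (l - 1) ^ 2 * c ^ 2 * (l * (s * s))) by ring.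
    rewrite hGG, hls. unfold p. ring. }
  assert (hpos : 0 < l * g ^ 2 + 4 * (g ^ 2 + 1 - l) * (l - 1) * p).
  { apply (affine_pos_on _ _ p l); [nra| |exact hp].
    unfold gcpc_discr in hP. nra. }
  apply Rlt_minus, lt_of_sq_lt; nra.
Qed.

Lemma gcpc_slope_neg_nonneg (c : R) : l <= 1 -> 0 <= c <= 1 -> gcpc_slope c < 0.
Proof.
  intros hl1 hc. unfold gcpc_slope.
  pose proof (abs_le_sqrt_gcpc_b c ltac:(lra)) as hs. rewrite Rabs_right in hs by lra.
  pose proof (sqrt_pos (g ^ 2 + 1)). pose proof (lt_sqrt_sq_add_1 g).
  set (s := sqrt (gcpc_b c)) in *. set (G := sqrt (g ^ 2 + 1)) in *.
  assert (0 <= G * ((1 - l) * (c * (s - c)))) by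
    (repeat apply Rmult_le_pos; lra).
  assert (0 <= (1 - l) * (G - g) * c ^ 2) by
    (apply Rmult_le_pos; [apply Rmult_le_pos|]; nra).
  nra.
Qed.

Lemma gcpc_slope_pos_near_minus_1 (c : R) : l <= 1 / 2 -> -1 <= c <= - (3 / 4) ->
  0 < gcpc_slope c.
Proof.
  intros hl2 hc. unfold gcpc_slope.
  pose proof (abs_le_sqrt_gcpc_b c ltac:(lra)) as hs. rewrite Rabs_left in hs by lra.
  pose proof (sqrt_pos (g ^ 2 + 1)). pose proof (lt_sqrt_sq_add_1 g).
  set (s := sqrt (gcpc_b c)) in *. set (G := sqrt (g ^ 2 + 1)) in *.
  assert (0 <= G * ((1 - l) * (- c) * (s + c))) by
    (repeat apply Rmult_le_pos; lra).
  assert (0 <= (1 - 2 * l) * (G + g) * c ^ 2) by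
    (apply Rmult_le_pos; [apply Rmult_le_pos|]; nra).
  assert (9 / 16 <= c ^ 2) by nra.
  nra.
Qed.

End GcpcProfile.

Lemma gcpc_unimodal (g l w : R) : 0 < g -> 1 / 2 < l -> 0 < gcpc_discr g l ->
  - PI <= w <= PI -> unimodal_circ (gcpc_density w g l).
Proof.
  intros hg hl hP hw. pose proof PI_gt_3.
  destruct (circle_representative w ltac:(lra)) as [t [ht hcos]].
  apply (unimodal_circ_of_cos _ (gcpc_profile g l) t ht).
  - apply gcpc_profile_incr_on; try lra.
    intros c hc. apply gcpc_slope_neg; lra.
  - intros x. rewrite gcpc_density_eq, hcos. reflexivity.
Qed.

Lemma gcpc_two_local_max (g l w : R) : 0 < g -> 0 < l -> l <= 1 / 2 -> - PI <= w <= PI ->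
  exists t1 t2, on_circle t1 /\ on_circle t2 /\ t1 <> t2 /\
    is_local_max (gcpc_density w g l) t1 /\ is_local_max (gcpc_density w g l) t2.
Proof.
  intros hg hl hl2 hw. pose proof PI_gt_3.
  destruct (circle_representative w ltac:(lra)) as [t1 [ht1 hcos1]].
  destruct (circle_representative (w + PI) ltac:(lra)) as [t2 [ht2 hcos2]].
  exists t1, t2. split; [exact ht1|]. split; [exact ht2|]. split; [|split].
  - intros <-. specialize (hcos1 w). rewrite <- hcos2 in hcos1.
    replace (w - (w + PI)) with (- PI) in hcos1 by ring.
    rewrite Rminus_diag, cos_0, cos_neg, cos_PI in hcos1. lra.
  - apply (is_local_max_of_cos _ (gcpc_profile g l) t1 0); [lra| |].
    + apply strict_incr_on_le_right, gcpc_profile_incr_on; try lra.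
      intros c hc. apply gcpc_slope_neg_nonneg; lra.
    + intros x. rewrite gcpc_density_eq, hcos1. reflexivity.
  - apply (is_local_max_of_cos _ (fun c => gcpc_profile g l (- c)) t2 (3 / 4)); [lra| |].
    + intros c hc. apply (strict_decr_on_le_left (-1) (- (3 / 4))); [|lra].
      apply gcpc_profile_decr_on; try lra.
      intros c' hc'. apply gcpc_slope_pos_near_minus_1; lra.
    + intros x. rewrite gcpc_density_eq, <- hcos2, <- neg_cos.
      f_equal. f_equal. ring.
Qed.

Theorem mainTheorem8 (gamma lambda omega : R)
  (hg : 0 < gamma) (hl : 0 < lambda) (ho : - PI <= omega <= PI) :
  let f := gcpc_density omega gamma lambda in
  (lambda = 1 -> unimodal_circ f) /\
  (1 < lambda <= gamma ^ 2 + 1 -> unimodal_circ f) /\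
  (lambda > gamma ^ 2 + 1 ->
     (gamma ^ 2 + 1) * (lambda - 1) > (lambda - gamma ^ 2 - 1) * (2 * lambda - 1) ^ 2 ->
     unimodal_circ f) /\
  (1 / 2 < lambda < 1 ->
     (gamma ^ 2 + 1 - lambda) * (1 - 2 * lambda) ^ 2 > (gamma ^ 2 + 1) * (1 - lambda) ->
     unimodal_circ f) /\
  (lambda <= 1 / 2 ->
     exists t1 t2, on_circle t1 /\ on_circle t2 /\ t1 <> t2 /\
       is_local_max f t1 /\ is_local_max f t2).
Proof.
  intros f. unfold f.
  assert (hgam : 0 < gamma ^ 2) by nra.
  split; [|split; [|split; [|split]]].
  - intros ->. apply gcpc_unimodal; try lra. unfold gcpc_discr. nra.
  - intros hA. apply gcpc_unimodal; try lra. unfold gcpc_discr.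
    assert (0 <= (gamma ^ 2 + 1 - lambda) * (1 - 2 * lambda) ^ 2) by
      (apply Rmult_le_pos; nra).
    nra.
  - intros hB hdisc. apply gcpc_unimodal; try lra. unfold gcpc_discr. nra.
  - intros hC hdisc. apply gcpc_unimodal; try lra. unfold gcpc_discr. lra.
  - intros hD. apply gcpc_two_local_max; assumption.
Qed.
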